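(* For $K\ge N$, there is a symmetric matrix $H_K\in\mathbb{R}^{((K+2)n+m)\times((K+2)n+m)}$, not depending on $x_k$, $u_k$ or the reference values, such that $${}^{K}Q_0=\tfrac12\,\begin{bmatrix}x_k^\top & u_k^\top & r_k^\top & \cdots & r_{k+N}^\top & 0^\top\end{bmatrix} H_K \begin{bmatrix}x_k^\top & u_k^\top & r_k^\top & \cdots & r_{k+N}^\top & 0^\top\end{bmatrix}^\top ,$$ where the trailing zero vector has dimension $(K-N)n$. Partitioning $H_K$ into blocks $h_{ab}$ according to the components $a,b\in\{x,u,r_0,r_1,\dots,r_K\}$ (of sizes $n,m,n,\dots,n$), the blocks have the following zero pattern: $h_{u r_0}=h_{r_0u}^\top=0$; $h_{r_0 r_j}=0$ for all $j\ge1$; $h_{r_1 r_j}=0$ for all $j\neq1$; and $h_{r_i r_0}=h_{r_i r_1}=0$ for all $i\ge2$. All other blocks ($h_{xx},h_{xu},h_{xr_j},h_{uu},h_{ur_j}$ for $j\ge1$, $h_{r_0r_0}$, $h_{r_1r_1}$, and $h_{r_ir_j}$ for $i,j\ge2$, together with their transposes) may be nonzero.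
   Context: Consider the discrete-time linear system $x_{i+1}=Ax_i+Bu_i$ with $x_i\in\mathbb{R}^n$, $u_i\in\mathbb{R}^m$, $A\in\mathbb{R}^{n\times n}$, $B\in\mathbb{R}^{n\times m}$, $(A,B)$ controllable. Fix a time step $k$ and $N\in\mathbb{N}$; references $r_i\in\mathbb{R}^n$ are given for $i=k,\dots,k+N$ and $r_i=0$ for $i>k+N$. The one-step cost is $c_i=\tfrac12\big((x_i-r_i)^\top Q(x_i-r_i)+u_i^\top Ru_i\big)$ with $Q=Q^\top\succeq0$, $R=R^\top\succ0$, and $\gamma\in[0,1)$. For an optimization horizon $K$, the reference-dependent Q-function is defined by backward recursion: ${}^{K}Q_K=c(x_{k+K},u_{k+K},r_{k+K})$ and, for $0\le\kappa<K$, ${}^{K}Q_\kappa=c_{k+\kappa}+\gamma\,{}^{K}Q_{\kappa+1}|_{u_{k+\kappa+1}=u^*_{k+\kappa+1}}$, where $x_{k+\kappa+1}=Ax_{k+\kappa}+Bu_{k+\kappa}$ and $u^*_{k+\kappa+1}$ minimizes ${}^{K}Q_{\kappa+1}$ over $u_{k+\kappa+1}$. Thus ${}^{K}Q_0$ is a function of $x_k,u_k,r_k,\dots,r_{k+K}$. *)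

From HB Require Import structures.
From mathcomp Require Import all_boot all_order all_algebra.
From mathcomp Require Import all_classical all_reals.
Set Implicit Arguments. Unset Strict Implicit. Unset Printing Implicit Defensive.
Import Order.TTheory GRing.Theory Num.Theory.
Local Open Scope ring_scope.
Local Open Scope classical_set_scope.

Definition qf (R : realType) (p : nat) (v : 'cV[R]_p) (M : 'M[R]_p) (w : 'cV[R]_p) : R :=
  ((v^T *m M *m w) 0 0).

Definition psd (R : realType) (p : nat) (M : 'M[R]_p) : Prop :=
  M^T = M /\ forall v : 'cV[R]_p, 0 <= qf v M v.

Definition pd (R : realType) (p : nat) (M : 'M[R]_p) : Prop :=
  M^T = M /\ forall v : 'cV[R]_p, v != 0 -> 0 < qf v M v.

Definition controllable (R : realType) (n m : nat) (A : 'M[R]_n) (B : 'M[R]_(n, m)) : Prop :=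
  \rank (\mxrow_(i < n) (A ^+ i *m B)) = n.

Definition cost (R : realType) (n m : nat) (Qw : 'M[R]_n) (Rw : 'M[R]_m)
  (x : 'cV[R]_n) (u : 'cV[R]_m) (r : 'cV[R]_n) : R :=
  (qf (x - r) Qw (x - r) + qf u Rw u) / 2.

(* Qrem j kappa x u  =  ^K Q_kappa (x_{k+kappa}, u_{k+kappa}) with j = K - kappa remaining
   steps; r i stands for r_{k+i}.  The value of Q_{kappa+1} at its minimizer u* is its
   minimum value, written as the infimum over u_{k+kappa+1}. *)
Fixpoint Qrem (R : realType) (n m : nat) (A : 'M[R]_n) (B : 'M[R]_(n, m))
  (Qw : 'M[R]_n) (Rw : 'M[R]_m) (gamma : R) (r : nat -> 'cV[R]_n)
  (j kappa : nat) (x : 'cV[R]_n) (u : 'cV[R]_m) : R :=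
  match j with
  | 0 => cost Qw Rw x u (r kappa)
  | j'.+1 => cost Qw Rw x u (r kappa) +
      gamma * inf [set Qrem A B Qw Rw gamma r j' kappa.+1 (A *m x + B *m u) v
                  | v in [set: 'cV[R]_m]]
  end.

Definition Q0 (R : realType) (n m : nat) (A : 'M[R]_n) (B : 'M[R]_(n, m))
  (Qw : 'M[R]_n) (Rw : 'M[R]_m) (gamma : R) (r : nat -> 'cV[R]_n) (K : nat)
  (x : 'cV[R]_n) (u : 'cV[R]_m) : R := Qrem A B Qw Rw gamma r K 0 x u.

(* Stacked vector z = [x; u; r_0; r_1; ...; r_K], of dimension n + m + (K+1) n
   = (K+2) n + m.  The r-part is ordered r_0 first (mxvec is row-major). *)
Definition stackz (R : realType) (n m K : nat) (x : 'cV[R]_n) (u : 'cV[R]_m)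
  (r : nat -> 'cV[R]_n) : 'cV[R]_(n + m + K.+1 * n) :=
  col_mx (col_mx x u) (mxvec (\matrix_(i < K.+1, j < n) r i j 0))^T.

Definition xidx (n m K : nat) (a : 'I_n) : 'I_(n + m + K.+1 * n) :=
  lshift (K.+1 * n) (lshift m a).
Definition uidx (n m K : nat) (a : 'I_m) : 'I_(n + m + K.+1 * n) :=
  lshift (K.+1 * n) (rshift n a).
Definition ridx (n m K : nat) (i : 'I_K.+1) (a : 'I_n) : 'I_(n + m + K.+1 * n) :=
  rshift (n + m) (mxvec_index i a).

Definition h_ur (R : realType) (n m K : nat) (H : 'M[R]_(n + m + K.+1 * n)) (j : 'I_K.+1)
  : 'M[R]_(m, n) := mxsub (@uidx n m K) (@ridx n m K j) H.
Definition h_ru (R : realType) (n m K : nat) (H : 'M[R]_(n + m + K.+1 * n)) (i : 'I_K.+1)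
  : 'M[R]_(n, m) := mxsub (@ridx n m K i) (@uidx n m K) H.
Definition h_rr (R : realType) (n m K : nat) (H : 'M[R]_(n + m + K.+1 * n)) (i j : 'I_K.+1)
  : 'M[R]_n := mxsub (@ridx n m K i) (@ridx n m K j) H.

From HB Require Import structures.
From mathcomp Require Import all_boot all_order all_algebra.
From mathcomp Require Import all_classical all_reals.
From mathcomp Require Import ring lra.
Set Implicit Arguments. Unset Strict Implicit. Unset Printing Implicit Defensive.
Import Order.TTheory GRing.Theory Num.Theory.
Local Open Scope ring_scope.
Local Open Scope classical_set_scope.

(** By backward induction on the horizon, every Q-function of the recursion
  is a quadratic form in [(u; x; r_0, ..., r_K)] whose [u]-block is positive
  definite: minimising such a form over [u] leaves its Schur complement
  (completing the square), and adding the stage cost keeps the [u]-block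
  positive definite.

  The zero blocks come from separability.  We have
  [Q_0 = c(x, u, r_0) + gamma V_1(Ax + Bu; r)] where [V_1] ignores [r_0] and
  [V_1(0; 0) = 0]; moreover [V_1(y; r) - (y - r_1)^T Q (y - r_1) / 2]
  ignores [r_1] as well, since [r_1] enters stage 1 only through its cost.
  Hence [Q_0] is additive along the pairs of directions [(u, r_0)],
  [(r_0, r_j)] and [(r_1, r_j)], [j >= 2], and by polarization the
  corresponding blocks of [H_K] vanish. *)

Section BilinearForm.
Variable R : comNzRingType.

Definition bform p q (v : 'cV[R]_p) (M : 'M[R]_(p, q)) (w : 'cV[R]_q) : R :=
  (v^T *m M *m w) 0 0.

Lemma bformDl p q (v1 v2 : 'cV_p) M (w : 'cV_q) :
  bform (v1 + v2) M w = bform v1 M w + bform v2 M w.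
Proof. by rewrite /bform linearD /= !mulmxDl mxE. Qed.

Lemma bformDr p q (v : 'cV_p) M (w1 w2 : 'cV_q) :
  bform v M (w1 + w2) = bform v M w1 + bform v M w2.
Proof. by rewrite /bform mulmxDr mxE. Qed.

Lemma bformDm p q (v : 'cV_p) M1 M2 (w : 'cV_q) :
  bform v (M1 + M2) w = bform v M1 w + bform v M2 w.
Proof. by rewrite /bform mulmxDr mulmxDl mxE. Qed.

Lemma bformZm p q (v : 'cV_p) c M (w : 'cV_q) : bform v (c *: M) w = c * bform v M w.
Proof. by rewrite /bform -scalemxAr -scalemxAl mxE. Qed.

Lemma bformNm p q (v : 'cV_p) M (w : 'cV_q) : bform v (- M) w = - bform v M w.
Proof. by rewrite -scaleN1r bformZm mulN1r. Qed.

Lemma bform0l p q M (w : 'cV_q) : bform (0 : 'cV_p) M w = 0.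
Proof. by rewrite /bform linear0 !mul0mx mxE. Qed.

Lemma bform0m p q (v : 'cV_p) (w : 'cV_q) : bform v 0 w = 0.
Proof. by rewrite /bform mulmx0 mul0mx mxE. Qed.

Lemma bformMl p q r (L : 'M_(p, r)) (v : 'cV_r) M (w : 'cV_q) :
  bform (L *m v) M w = bform v (L^T *m M) w.
Proof. by rewrite /bform trmx_mul !mulmxA. Qed.

Lemma bformMr p q r (L : 'M_(q, r)) (v : 'cV_p) M (w : 'cV_r) :
  bform v M (L *m w) = bform v (M *m L) w.
Proof. by rewrite /bform !mulmxA. Qed.

Lemma bform_tr p q (v : 'cV_p) M (w : 'cV_q) : bform v M w = bform w M^T v.
Proof.
have -> : bform v M w = (v^T *m M *m w)^T 0 0 by rewrite mxE.
by rewrite !trmx_mul trmxK mulmxA.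
Qed.

Lemma bform_delta p q (M : 'M[R]_(p, q)) k l :
  bform (delta_mx k 0) M (delta_mx l 0) = M k l.
Proof. by rewrite /bform trmx_delta -rowE -colE !mxE. Qed.

End BilinearForm.

Section Infimum.
Variables (R : realType) (T : Type).
Implicit Type F : T -> R.

Lemma inf_image_min F t0 :
  (forall t, F t0 <= F t) -> inf [set F t | t in [set: T]] = F t0.
Proof.
move=> Fmin; apply/le_anti/andP; split.
  by apply: ge_inf; [exists (F t0) => _ [t _ <-] | exists t0].
by apply: lb_le_inf; [exists (F t0), t0 | move=> _ [t _ <-]].
Qed.

Lemma inf_image_ge0 F :
  [set: T] !=set0 -> (forall t, 0 <= F t) -> 0 <= inf [set F t | t in [set: T]].
Proof.
by move=> [t0 _] F_ge0; apply: lb_le_inf; [exists (F t0), t0 | move=> _ [t _ <-]].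
Qed.

Lemma inf_image_addr F b d : [set: T] !=set0 -> (forall t, b <= F t) ->
  inf [set F t + d | t in [set: T]] = inf [set F t | t in [set: T]] + d.
Proof.
move=> [t0 _] Fb.
have lbF : has_lbound [set F t | t in [set: T]] by exists b => _ [t _ <-].
apply/le_anti/andP; split.
  rewrite -lerBlDr.
  apply: lb_le_inf; first by exists (F t0), t0.
  move=> _ [t _ <-]; rewrite lerBlDr; apply: ge_inf; last by exists t.
  by exists (b + d) => _ [s _ <-]; rewrite lerD2r.
apply: lb_le_inf; first by exists (F t0 + d), t0.
by move=> _ [t _ <-]; rewrite lerD2r; apply: ge_inf => //; exists t.
Qed.

End Infimum.

Section QuadraticForm.
Variable R : realType.

Lemma qfE p (v : 'cV[R]_p) M w : qf v M w = bform v M w.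
Proof. by []. Qed.

Definition symmx p (M : 'M[R]_p) : 'M[R]_p := 2^-1 *: (M + M^T).

Lemma symmx_tr p (M : 'M[R]_p) : (symmx M)^T = symmx M.
Proof. by rewrite /symmx linearZ /= linearD /= trmxK addrC. Qed.

Lemma qf_symmx p (M : 'M[R]_p) v : qf v (symmx M) v = qf v M v.
Proof. by rewrite !qfE bformZm bformDm (bform_tr v M^T) trmxK; field. Qed.

Lemma qf_polar p (H : 'M[R]_p) z1 z2 : H^T = H ->
  qf (z1 + z2) H (z1 + z2) / 2 = qf z1 H z1 / 2 + qf z2 H z2 / 2 + bform z1 H z2.
Proof. by move=> HT; rewrite !qfE !bformDl !bformDr (bform_tr z2) HT; field. Qed.

Lemma pd_unitmx p (S : 'M[R]_p) : pd S -> S \in unitmx.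
Proof.
case=> _ Spos; rewrite unitmxE unitfE; apply/negP => /det0P [v v_neq0 vS].
have /Spos : v^T != 0 by rewrite trmx_eq0.
by rewrite /qf trmxK vS mul0mx mxE ltxx.
Qed.

Lemma pd_qf_ge0 p (S : 'M[R]_p) v : pd S -> 0 <= qf v S v.
Proof.
case=> _ Spos; have [->|/Spos/ltW //] := eqVneq v 0.
by rewrite qfE bform0l.
Qed.

Definition block_qf p q (S : 'M[R]_p) (C : 'M[R]_(p, q)) (E : 'M[R]_q) v w : R :=
  (qf v S v + 2 * bform v C w + qf w E w) / 2.

Definition schur p q (S : 'M[R]_p) (C : 'M[R]_(p, q)) (E : 'M[R]_q) : 'M[R]_q :=
  E - C^T *m invmx S *m C.

Lemma block_qf_square p q (S : 'M[R]_p) (C : 'M[R]_(p, q)) E v w : pd S ->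
  let d := invmx S *m (C *m w) in
  block_qf S C E v w = qf (v + d) S (v + d) / 2 + qf w (schur S C E) w / 2.
Proof.
move=> Spd d; have [ST _] := Spd.
have Sd z : bform z S d = bform z C w.
  by rewrite bformMr mulmxV ?pd_unitmx // bformMr mul1mx.
have dSd : bform d S d = bform w (C^T *m invmx S *m C) w.
  by rewrite Sd /d !bformMl trmx_inv ST mulmxA.
rewrite /block_qf /schur !qfE bformDl !bformDr bformDm bformNm.
by rewrite (bform_tr d S v) ST dSd !Sd; ring.
Qed.

Lemma block_qf_min p q (S : 'M[R]_p) (C : 'M[R]_(p, q)) E w : pd S ->
  inf [set block_qf S C E v w | v in [set: 'cV[R]_p]] = qf w (schur S C E) w / 2.
Proof.
move=> Spd; rewrite (@inf_image_min _ _ _ (- (invmx S *m (C *m w)))).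
  by rewrite block_qf_square // addNr qfE bform0l mul0r add0r.
move=> v; rewrite !block_qf_square // addNr qfE bform0l mul0r add0r lerDr.
by apply: divr_ge0 => //; apply: pd_qf_ge0.
Qed.

End QuadraticForm.

Section Cost.
Variables (R : realType) (n m : nat) (Qw : 'M[R]_n) (Rw : 'M[R]_m).
Hypotheses (Qpsd : psd Qw) (Rpd : pd Rw).

Lemma cost_ge0 x u rho : 0 <= cost Qw Rw x u rho.
Proof.
apply: divr_ge0 => //; apply: addr_ge0; last exact: pd_qf_ge0.
by case: Qpsd.
Qed.

Lemma cost_split x u rho : cost Qw Rw x u rho = cost Qw Rw x 0 rho + cost Qw Rw 0 u 0.
Proof. by rewrite /cost subrr !qfE !bform0l addr0 add0r mulrDl. Qed.

Lemma cost0 : cost Qw Rw 0 0 0 = 0.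
Proof. by rewrite /cost subr0 !qfE !bform0l addr0 mul0r. Qed.

End Cost.

Section ValueFunction.
Variables (R : realType) (n m : nat) (A : 'M[R]_n) (B : 'M[R]_(n, m)).
Variables (Qw : 'M[R]_n) (Rw : 'M[R]_m) (gamma : R).
Hypotheses (Qpsd : psd Qw) (Rpd : pd Rw) (gamma_ge0 : 0 <= gamma).

Notation Qr := (Qrem A B Qw Rw gamma).
Notation c := (cost Qw Rw).

Let setT_cV : [set: 'cV[R]_m] !=set0. Proof. by exists 0. Qed.

Definition Vmin (r : nat -> 'cV[R]_n) (j kappa : nat) (y : 'cV[R]_n) : R :=
  inf [set Qr r j kappa y v | v in [set: 'cV[R]_m]].

Lemma QremS r j kappa x u :
  Qr r j.+1 kappa x u = c x u (r kappa) + gamma * Vmin r j kappa.+1 (A *m x + B *m u).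
Proof. by []. Qed.

Lemma Qrem_ge0 r j : forall kappa x u, 0 <= Qr r j kappa x u.
Proof.
elim: j => [|j IH] kappa x u; first exact: cost_ge0.
rewrite QremS; apply: addr_ge0; first exact: cost_ge0.
by apply: mulr_ge0 => //; apply: inf_image_ge0.
Qed.

Lemma Vmin_ge0 r j kappa y : 0 <= Vmin r j kappa y.
Proof. exact/inf_image_ge0/Qrem_ge0. Qed.

Lemma Qrem_eq r r' j : forall kappa x u,
  (forall i, (kappa <= i <= kappa + j)%N -> r i = r' i) ->
  Qr r j kappa x u = Qr r' j kappa x u.
Proof.
elim: j => [|j IH] kappa x u eq_r /=; first by rewrite eq_r // addn0 leqnn.
rewrite eq_r ?leqnn ?leq_addr //; congr (_ + _ * inf _).
apply: eq_imagel => v _; apply: IH => i /andP [lt_i le_i]; apply: eq_r.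
by rewrite (ltnW lt_i) addnS -addSn.
Qed.

Lemma Vmin_eq r r' j kappa y :
  (forall i, (kappa <= i <= kappa + j)%N -> r i = r' i) ->
  Vmin r j kappa y = Vmin r' j kappa y.
Proof. by move=> eq_r; congr inf; apply: eq_imagel => v _; apply: Qrem_eq. Qed.

Lemma Qrem_zero j : forall kappa, Qr (fun _ => 0) j kappa 0 0 = 0.
Proof.
elim: j => [|j IH] kappa; first exact: cost0.
rewrite QremS cost0 add0r !mulmx0 addr0 /Vmin (@inf_image_min _ _ _ 0) /=.
  by rewrite IH mulr0.
by move=> v; rewrite IH Qrem_ge0.
Qed.

Lemma Vmin_zero j kappa : Vmin (fun _ => 0) j kappa 0 = 0.
Proof.
rewrite /Vmin (@inf_image_min _ _ _ 0) /= (Qrem_zero j kappa) // => v.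
exact: Qrem_ge0.
Qed.

Lemma Qrem_sub_cost_eq r r' j kappa y v :
  (forall i, (kappa < i <= kappa + j)%N -> r i = r' i) ->
  Qr r j kappa y v - c y 0 (r kappa) = Qr r' j kappa y v - c y 0 (r' kappa).
Proof.
case: j => [|j] eq_r; first by rewrite /= !(cost_split _ _ y v); ring.
rewrite !QremS !(cost_split _ _ y v) (@Vmin_eq r r'); first by ring.
by move=> i /andP [lt_i le_i]; rewrite eq_r // lt_i -addSnnS.
Qed.

Lemma Vmin_sub_cost_eq r r' j kappa y :
  (forall i, (kappa < i <= kappa + j)%N -> r i = r' i) ->
  Vmin r j kappa y - c y 0 (r kappa) = Vmin r' j kappa y - c y 0 (r' kappa).
Proof.
move=> eq_r; rewrite /Vmin.
have -> : [set Qr r j kappa y v | v in [set: 'cV[R]_m]] =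
    [set Qr r' j kappa y v + (c y 0 (r kappa) - c y 0 (r' kappa)) | v in [set: 'cV[R]_m]].
  by apply: eq_imagel => v _; have := Qrem_sub_cost_eq y v eq_r; lra.
by rewrite (@inf_image_addr _ _ _ 0) //; [ring | move=> v; apply: Qrem_ge0].
Qed.

Lemma Qrem_split_u_r0 K u r : (forall i, (0 < i)%N -> r i = 0) ->
  Qr r K 0 0 u = Qr (fun _ => 0) K 0 0 u + Qr r K 0 0 0.
Proof.
move=> r_supp; have split_u : c 0 u (r 0%N) = c 0 u 0 + c 0 0 (r 0%N).
  by rewrite cost_split addrC.
case: K => [|K]; first exact: split_u.
have eq_r i : (1 <= i <= 1 + K)%N -> r i = 0 by case/andP => /r_supp.
rewrite !QremS !mulmx0 add0r addr0 split_u (Vmin_eq _ eq_r).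
by rewrite (Vmin_eq _ eq_r) Vmin_zero; ring.
Qed.

Lemma Qrem_split_r0 K r1 r2 : (forall i, (0 < i)%N -> r1 i = 0) -> r2 0%N = 0 ->
  Qr (fun i => r1 i + r2 i) K 0 0 0 = Qr r1 K 0 0 0 + Qr r2 K 0 0 0.
Proof.
move=> r1_supp r20; case: K => [|K]; first by rewrite /= r20 addr0 cost0 addr0.
have eq_r1 i : (1 <= i <= 1 + K)%N -> r1 i = 0 by case/andP => /r1_supp.
have eq_r12 i : (1 <= i <= 1 + K)%N -> r1 i + r2 i = r2 i.
  by move=> /eq_r1 ->; rewrite add0r.
rewrite !QremS !mulmx0 addr0 r20 addr0 cost0 add0r (Vmin_eq _ eq_r12).
by rewrite (Vmin_eq _ eq_r1) Vmin_zero mulr0 addr0.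
Qed.

Lemma Qrem_split_r1 K r1 r2 :
  (forall i, i != 1%N -> r1 i = 0) -> (forall i, (i < 2)%N -> r2 i = 0) ->
  Qr (fun i => r1 i + r2 i) K 0 0 0 = Qr r1 K 0 0 0 + Qr r2 K 0 0 0.
Proof.
move=> r1_supp r2_supp; have r10 := r1_supp 0%N isT; have r20 := r2_supp 0%N isT.
case: K => [|K]; first by rewrite /= r10 r20 addr0 cost0 addr0.
have eq_r12 i : (1 < i <= 1 + K)%N -> r1 i + r2 i = r2 i.
  by case/andP => lt1i _; rewrite r1_supp ?add0r // gtn_eqF.
have eq_r1 i : (1 < i <= 1 + K)%N -> r1 i = 0.
  by case/andP => lt1i _; rewrite r1_supp // gtn_eqF.
have := Vmin_sub_cost_eq 0 eq_r12; have := Vmin_sub_cost_eq 0 eq_r1.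
rewrite !QremS !mulmx0 addr0 r10 r20 addr0 cost0 !add0r Vmin_zero r2_supp // addr0 cost0.
by move=> V1 V12; rewrite -mulrDr; congr (_ * _); lra.
Qed.

Section QuadraticRepresentation.
Variable K : nat.

Definition refvec (r : nat -> 'cV[R]_n) : 'cV[R]_(K.+1 * n) :=
  (mxvec (\matrix_(i < K.+1, a < n) r i a 0))^T.

Definition statevec (y : 'cV[R]_n) r : 'cV[R]_(n + K.+1 * n) := col_mx y (refvec r).

Definition refsel (k : nat) : 'M[R]_(n, K.+1 * n) :=
  \matrix_(a, b) (b == mxvec_index (inord k) a)%:R.

Definition trackerr k : 'M[R]_(n, n + K.+1 * n) := row_mx 1%:M (- refsel k).

Definition Aext : 'M[R]_(n + K.+1 * n) := block_mx A 0 0 1%:M.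

Definition Bext : 'M[R]_(n + K.+1 * n, m) := col_mx B 0.

Lemma refsel_refvec k r : (k <= K)%N -> refsel k *m refvec r = r k.
Proof.
move=> le_kK; apply/matrixP => a j; rewrite ord1 !mxE.
rewrite (bigD1 (mxvec_index (inord k) a)) //= big1 => [|b /negbTE b_neq].
  by rewrite addr0 !mxE eqxx mul1r mxvecE mxE inordK.
by rewrite !mxE b_neq mul0r.
Qed.

Lemma trackerr_statevec k y r : (k <= K)%N -> trackerr k *m statevec y r = y - r k.
Proof. by move=> le_kK; rewrite mul_row_col mul1mx mulNmx refsel_refvec. Qed.

Lemma refvec0 : refvec (fun _ => 0) = 0.
Proof.
rewrite /refvec (_ : \matrix_(i < K.+1, a < n) _ = 0) ?linear0 ?trmx0 //.
by apply/matrixP => i a; rewrite !mxE.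
Qed.

Lemma statevec_step y v r : statevec (A *m y + B *m v) r = Aext *m statevec y r + Bext *m v.
Proof.
rewrite /statevec /Aext /Bext mul_block_col mul_col_mx !mul0mx mul1mx.
by rewrite !addr0 add0r add_col_mx addr0.
Qed.

Lemma statevec_B v : statevec (B *m v) (fun _ => 0) = Bext *m v.
Proof. by rewrite /statevec refvec0 mul_col_mx mul0mx. Qed.

Lemma cost_block_qf k y v r : (k <= K)%N ->
  c y v (r k) = block_qf Rw 0 ((trackerr k)^T *m Qw *m trackerr k) v (statevec y r).
Proof.
move=> le_kK; rewrite /cost /block_qf -trackerr_statevec // !qfE bformMl bformMr bform0m.
by congr (_ / 2); ring.
Qed.

Lemma Vmin_block_qf S C E j kappa : pd S ->
  (forall y v r, Qr r j kappa y v = block_qf S C E v (statevec y r)) ->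
  forall y r, Vmin r j kappa y = qf (statevec y r) (schur S C E) (statevec y r) / 2.
Proof.
move=> Spd Qr_qf y r; rewrite /Vmin -block_qf_min //.
by congr inf; apply: eq_imagel => v _; apply: Qr_qf.
Qed.

(** [statevec] carries all of [r_0, ..., r_K]; stage [kappa] ignores those before [kappa]. *)
Lemma Qrem_block_qf j : forall kappa, (kappa + j <= K)%N ->
  exists S C E, pd S /\ forall y v r, Qr r j kappa y v = block_qf S C E v (statevec y r).
Proof.
elim: j => [|j IH] kappa le_K.
  exists Rw, 0, ((trackerr kappa)^T *m Qw *m trackerr kappa); split => // y v r.
  by rewrite /= cost_block_qf // -(addn0 kappa).
have le_K' : (kappa.+1 + j <= K)%N by rewrite addSn -addnS.
have [S [C [E [Spd Qr_qf]]]] := IH _ le_K'.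
set P := symmx (schur S C E).
have Vmin_P y r : Vmin r j kappa.+1 y = qf (statevec y r) P (statevec y r) / 2.
  by rewrite qf_symmx; apply: Vmin_block_qf.
have P_ge0 v : 0 <= qf (Bext *m v) P (Bext *m v).
  by have := Vmin_ge0 (fun _ => 0) j kappa.+1 (B *m v); rewrite Vmin_P statevec_B; lra.
have PT : P^T = P by apply: symmx_tr.
clearbody P.
exists (Rw + gamma *: (Bext^T *m P *m Bext)), (gamma *: (Bext^T *m P *m Aext)),
  ((trackerr kappa)^T *m Qw *m trackerr kappa + gamma *: (Aext^T *m P *m Aext)).
split; first split.
- rewrite linearD /= linearZ /= !trmx_mul trmxK PT mulmxA.
  by case: Rpd => ->.
- move=> v v_neq0; rewrite qfE bformDm bformZm -bformMr -bformMl.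
  have Rv : 0 < qf v Rw v by case: Rpd => _; apply.
  have := mulr_ge0 gamma_ge0 (P_ge0 v); rewrite !qfE in Rv *; lra.
- move=> y v r; rewrite QremS cost_block_qf; last by rewrite (leq_trans _ le_K) ?leq_addr.
  rewrite Vmin_P statevec_step /block_qf !qfE !bformDl !bformDr !bformDm !bformZm !bform0m.
  rewrite !bformMl !bformMr (bform_tr (statevec y r) (Aext^T *m P *m Bext)).
  by rewrite !trmx_mul trmxK PT mulmxA; field.
Qed.

Lemma Q0_qf : exists H : 'M[R]_(n + m + K.+1 * n), H^T = H /\
  forall x u r, Qr r K 0 x u = qf (stackz K x u r) H (stackz K x u r) / 2.
Proof.
have [S [C [E [_ Qr_qf]]]] := @Qrem_block_qf K 0 (leqnn K).
pose Pu : 'M[R]_(m, n + m + K.+1 * n) := row_mx (row_mx 0 1%:M) 0.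
pose Pw : 'M[R]_(n + K.+1 * n, n + m + K.+1 * n) := block_mx (row_mx 1%:M 0) 0 0 1%:M.
have Pu_stackz x u r : Pu *m stackz K x u r = u.
  by rewrite /stackz !mul_row_col !mul0mx mul1mx add0r addr0.
have Pw_stackz x u r : Pw *m stackz K x u r = statevec x r.
  by rewrite /stackz mul_block_col mul_row_col !mul0mx !mul1mx !addr0 add0r.
exists (symmx (Pu^T *m S *m Pu + 2 *: (Pu^T *m C *m Pw) + Pw^T *m E *m Pw)).
split=> [|x u r]; first exact: symmx_tr.
rewrite qf_symmx Qr_qf; set z := stackz K x u r.
rewrite -(Pu_stackz x u r) -(Pw_stackz x u r) -/z /block_qf.
by rewrite !qfE !bformDm !bformZm !bformMl !bformMr.
Qed.

Lemma stackz_add (x1 x2 : 'cV[R]_n) (u1 u2 : 'cV[R]_m) r1 r2 :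
  stackz K x1 u1 r1 + stackz K x2 u2 r2 =
  stackz K (x1 + x2) (u1 + u2) (fun i => r1 i + r2 i).
Proof.
rewrite /stackz !add_col_mx -!linearD /=; congr (col_mx _ (mxvec _)^T).
by apply/matrixP => i a; rewrite !mxE.
Qed.

Definition refdelta (i : nat) (a : 'I_n) (k : nat) : 'cV[R]_n :=
  if k == i then delta_mx a 0 else 0.

Lemma refdelta_neq i a k : k != i -> refdelta i a k = 0.
Proof. by rewrite /refdelta => /negbTE ->. Qed.

Lemma delta_uidx (a : 'I_m) :
  delta_mx (@uidx n m K a) 0 = stackz K 0 (delta_mx a 0 : 'cV[R]_m) (fun _ => 0).
Proof.
by rewrite /uidx delta_mx_ushift delta_mx_dshift /stackz -[X in col_mx _ X]refvec0.
Qed.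

Lemma delta_ridx (i : 'I_K.+1) (a : 'I_n) :
  delta_mx (@ridx n m K i a) 0 = stackz K 0 0 (refdelta i a).
Proof.
rewrite /ridx delta_mx_dshift /stackz col_mx0; congr col_mx.
rewrite -trmx_delta -mxvec_delta; congr (mxvec _)^T.
apply/matrixP => i' b; rewrite !mxE /refdelta.
have [->|neq_i] := eqVneq i' i; first by rewrite !eqxx /= mxE eqxx andbT.
by rewrite ifF ?mxE //; apply/negbTE.
Qed.

Section Entries.
Variable H : 'M[R]_(n + m + K.+1 * n).
Hypotheses (HT : H^T = H)
  (Qr_H : forall x u r, Qr r K 0 x u = qf (stackz K x u r) H (stackz K x u r) / 2).

Lemma bform_stackz_eq0 x1 u1 r1 x2 u2 r2 :
  Qr (fun i => r1 i + r2 i) K 0 (x1 + x2) (u1 + u2) = Qr r1 K 0 x1 u1 + Qr r2 K 0 x2 u2 ->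
  bform (stackz K x1 u1 r1) H (stackz K x2 u2 r2) = 0.
Proof. by rewrite !Qr_H -stackz_add qf_polar // => ?; lra. Qed.

Lemma H_u_r0 a b : H (@uidx n m K a) (@ridx n m K 0 b) = 0.
Proof.
rewrite -bform_delta delta_uidx delta_ridx; apply: bform_stackz_eq0 => /=.
rewrite !addr0 (_ : (fun i => 0 + refdelta 0 b i) = refdelta 0 b).
  by apply: Qrem_split_u_r0 => i /lt0n_neq0 /refdelta_neq.
by apply: funext => i; rewrite add0r.
Qed.

Lemma H_r0_r (j : 'I_K.+1) a b : (0 < j)%N -> H (@ridx n m K 0 a) (@ridx n m K j b) = 0.
Proof.
move=> j_gt0; rewrite -bform_delta !delta_ridx; apply: bform_stackz_eq0.
rewrite !addr0; apply: Qrem_split_r0 => [i /lt0n_neq0|]; first exact: refdelta_neq.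
by apply: refdelta_neq; rewrite eq_sym -lt0n.
Qed.

Lemma H_r1_r (j : 'I_K.+1) a b : (1 < j)%N ->
  H (@ridx n m K (inord 1) a) (@ridx n m K j b) = 0.
Proof.
move=> j_gt1; have lt1_K : (1 < K.+1)%N by apply: leq_trans j_gt1 _; rewrite ltnW.
rewrite -bform_delta !delta_ridx inordK //; apply: bform_stackz_eq0.
rewrite !addr0; apply: Qrem_split_r1 => [i|i lt_i2]; first exact: refdelta_neq.
by apply: refdelta_neq; rewrite ltn_eqF // (leq_trans lt_i2).
Qed.

End Entries.

End QuadraticRepresentation.

End ValueFunction.

Theorem theorem1 (R : realType) (n m N K : nat)
  (A : 'M[R]_n) (B : 'M[R]_(n, m)) (Qw : 'M[R]_n) (Rw : 'M[R]_m) (gamma : R) :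
  controllable A B -> psd Qw -> pd Rw -> 0 <= gamma -> gamma < 1 ->
  (N <= K)%N ->
  exists H : 'M[R]_(n + m + K.+1 * n),
    H^T = H /\
    (forall (x : 'cV[R]_n) (u : 'cV[R]_m) (r : nat -> 'cV[R]_n),
       (forall i, (N < i)%N -> r i = 0) ->
       Q0 A B Qw Rw gamma r K x u = qf (stackz K x u r) H (stackz K x u r) / 2) /\
    h_ur H 0 = 0 /\ h_ru H 0 = 0 /\
    (forall j : 'I_K.+1, (1 <= j)%N -> h_rr H 0 j = 0) /\
    (forall j : 'I_K.+1, (j != 1 :> nat) -> (1 <= K)%N -> h_rr H (inord 1) j = 0) /\
    (forall i : 'I_K.+1, (2 <= i)%N ->
       h_rr H i 0 = 0 /\ ((1 <= K)%N -> h_rr H i (inord 1) = 0)).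
Proof.
move=> _ Qpsd Rpd gamma_ge0 _ _.
have [H [HT Qr_H]] := Q0_qf A B Qpsd Rpd gamma_ge0 K.
have Hu := H_u_r0 Qpsd Rpd gamma_ge0 HT Qr_H.
have Hr0 := H_r0_r Qpsd Rpd gamma_ge0 HT Qr_H.
have Hr1 := H_r1_r Qpsd Rpd gamma_ge0 HT Qr_H.
have Hsym k l : H k l = H l k by rewrite -[in LHS]HT mxE.
exists H; split=> //; split=> [x u r _|]; first exact: Qr_H.
split; first by apply/matrixP => a b; rewrite !mxE Hu.
split; first by apply/matrixP => a b; rewrite !mxE Hsym Hu.
split; first by move=> j j_gt0; apply/matrixP => a b; rewrite !mxE Hr0.
split=> [j j_neq1 K_gt0 | i i_gt1]; last first.
  split=> [|K_gt0]; apply/matrixP => a b; rewrite !mxE Hsym ?Hr1 ?Hr0 //.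
  exact: leq_trans i_gt1.
apply/matrixP => a b; rewrite !mxE; have [j0|j_gt0] := posnP j.
  by rewrite Hsym (_ : j = 0) ?Hr0 ?inordK //; apply: val_inj.
by apply: Hr1; rewrite ltn_neqAle eq_sym j_neq1.
Qed.
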